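(* Let $\mathcal{M}_i=(E_i,\rho_i)$, $i=1,2$, be $q$-matroids with sets of cyclic flats $\mathcal{Z}_i$, and let $\rho$ be the rank function of $\mathcal{M}_1\oplus\mathcal{M}_2$ on $E=E_1\oplus E_2$. Then for all $V\le E$, \[ \rho(V)=\min_{Z_1\in\mathcal{Z}_1,\,Z_2\in\mathcal{Z}_2}\Big(\rho(Z_1\oplus Z_2)+\dim\big((V+Z_1\oplus Z_2)/(Z_1\oplus Z_2)\big)\Big). \]
   Context: Let $\mathbb{F}=\mathbb{F}_q$. A $q$-matroid is $\mathcal{M}=(E,\rho)$, $E$ a finite-dimensional $\mathbb{F}$-vector space, $\rho$ from subspaces to $\mathbb{Z}_{\ge0}$ with $0\le\rho(V)\le\dim V$, monotone and submodular. Flat: $\rho(F+\langle x\rangle)>\rho(F)$ for all $x\notin F$. Cyclic core: $\mathrm{cyc}(V)=\{x\in V\mid\rho(W)=\rho(V)\text{ for all }W\le V\text{ with }W+\langle x\rangle=V\}$; cyclic: $\mathrm{cyc}(V)=V$; a cyclic flat is a flat that is cyclic. Direct sum: for $E=E_1\oplus E_2$ with projections $\pi_i$, $\mathcal{M}_1\oplus\mathcal{M}_2=(E,\rho)$ where $\rho(V)=\dim V+\min_{X\le V}(\rho_1(\pi_1(X))+\rho_2(\pi_2(X))-\dim X)$. *)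

From HB Require Import structures.
From mathcomp Require Import all_boot all_order all_algebra.
Set Implicit Arguments. Unset Strict Implicit. Unset Printing Implicit Defensive.
Import Order.TTheory GRing.Theory Num.Theory.

(* Over a finite field, the type of subspaces of a finite-dimensional space is
   finite (it is a subtype of a finite matrix type); we register this so that
   minima over subspaces can be written as big operators. *)
Section FiniteSubspaces.
Import VectorInternalTheory.
Variables (F : finFieldType) (vT : vectType F).
HB.instance Definition _ := [Finite of {vspace vT} by <:].
End FiniteSubspaces.

Local Open Scope ring_scope.

Section QMatroid.
Variables (F : finFieldType) (E : vectType F).

(* q-matroid axioms for a rank function rho : subspaces -> Z_{>=0}
   (0 <= rho V is automatic for nat values). *)
Definition is_qmatroid (rho : {vspace E} -> nat) : Prop :=
  [/\ (forall V : {vspace E}, (rho V <= \dim V)%N),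
      (forall V W : {vspace E}, (V <= W)%VS -> (rho V <= rho W)%N) &
      (forall V W : {vspace E},
          (rho (V + W)%VS + rho (V :&: W)%VS <= rho V + rho W)%N)].

Definition is_flat (rho : {vspace E} -> nat) (Fl : {vspace E}) : Prop :=
  forall x : E, x \notin Fl -> (rho Fl < rho (Fl + <[x]>)%VS)%N.

Definition in_cyc (rho : {vspace E} -> nat) (V : {vspace E}) (x : E) : Prop :=
  x \in V /\
  (forall W : {vspace E}, (W <= V)%VS -> (W + <[x]>)%VS = V -> rho W = rho V).

(* Cyclic: cyc(V) = V (cyc(V) is contained in V by definition). *)
Definition is_cyclic (rho : {vspace E} -> nat) (V : {vspace E}) : Prop :=
  forall x : E, x \in V -> in_cyc rho V x.

Definition is_cyclic_flat (rho : {vspace E} -> nat) (Z : {vspace E}) : Prop :=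
  is_flat rho Z /\ is_cyclic rho Z.

End QMatroid.

Section DirectSum.
Variables (F : finFieldType) (E1 E2 : vectType F).

Definition proj1_vs (X : {vspace E1 * E2}) : {vspace E1} :=
  (linfun (fun x : E1 * E2 => x.1) @: X)%VS.
Definition proj2_vs (X : {vspace E1 * E2}) : {vspace E2} :=
  (linfun (fun x : E1 * E2 => x.2) @: X)%VS.

Definition dsum_vs (Z1 : {vspace E1}) (Z2 : {vspace E2}) : {vspace E1 * E2} :=
  (linfun (fun x : E1 => (x, 0 : E2)) @: Z1
   + linfun (fun y : E2 => (0 : E1, y)) @: Z2)%VS.

(* The minimum is a big [Order.min] over the finite type of subspaces X <= V;
   its neutral element is the value of the term at X = 0, which is in the
   range, so the big operator is exactly the minimum. *)
Definition dsum_rank (rho1 : {vspace E1} -> nat) (rho2 : {vspace E2} -> nat)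
    (V : {vspace E1 * E2}) : int :=
  (\dim V)%:Z +
  \big[Order.min/((rho1 0%VS)%:Z + (rho2 0%VS)%:Z)]_(X : {vspace E1 * E2} | (X <= V)%VS)
     ((rho1 (proj1_vs X))%:Z + (rho2 (proj2_vs X))%:Z - (\dim X)%:Z).

End DirectSum.

(* Restricting a minimizer X for Z to X :&: V shows rho(V) <= rho(Z) +
   dim((V + Z)/Z) for every Z, which is the lower bound.  Conversely, for a
   minimizer X for V, each M_i has a cyclic flat Z_i with
   rho_i(Z_i) + dim((pi_i X + Z_i)/Z_i) <= rho_i(pi_i X): lexicographically
   minimize rho_i(Z) + dim((pi_i X + Z)/Z), then 2 rho_i(Z) - dim Z, since
   adjoining a vector to a non-flat or dropping one from a non-cyclic space
   would decrease this key.  As X + Z1 (+) Z2 <= (pi1 X + Z1) (+) (pi2 X + Z2),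
   the pair (Z1, Z2) attains the minimum. *)

From HB Require Import structures.
From mathcomp Require Import all_boot all_order all_algebra zify.
Import Order.TTheory GRing.Theory Num.Theory.
Set Implicit Arguments.
Unset Strict Implicit.
Unset Printing Implicit Defensive.

Local Open Scope ring_scope.

Lemma dimv_add_subv_le (F : fieldType) (E : vectType F) (A Y Z : {vspace E}) :
  (Z <= Y)%VS -> (\dim (A + Y) + \dim Z <= \dim (A + Z) + \dim Y)%N.
Proof.
move=> sZY; have capS : (\dim (A :&: Z) <= \dim (A :&: Y))%N by rewrite dimvS ?capvS.
have := dimv_sum_cap A Y; have := dimv_sum_cap A Z; lia.
Qed.

Lemma dimv_add_line_le (F : fieldType) (E : vectType F) (U : {vspace E}) (x : E) :
  (\dim (U + <[x]>) <= (\dim U).+1)%N.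
Proof.
apply: leq_trans (dimv_add_leqif U <[x]>) _.
by rewrite dim_vline -addn1 leq_add2l leq_b1.
Qed.

Lemma exists_lexmin (T : finType) (f g : T -> nat) (x0 : T) :
  exists z, (f z <= f x0)%N /\ forall y, (f y <= f z)%N -> (g z <= g y)%N.
Proof.
have [z0 _ min_f] := @arg_minnP T x0 predT f erefl.
have [z /eqP f_z min_g] := @arg_minnP T z0 (fun z => f z == f z0) g (eqxx _).
exists z; split=> [|y le_yz]; first by rewrite f_z min_f.
by apply: min_g; rewrite eqn_leq -f_z le_yz f_z min_f.
Qed.

Section CyclicFlatApproximation.
Variables (F : finFieldType) (E : vectType F) (r : {vspace E} -> nat).
Hypothesis r_mono : forall V W : {vspace E}, (V <= W)%VS -> (r V <= r W)%N.
Variable A : {vspace E}.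

Let rank_codim (Z : {vspace E}) := (r Z + (\dim (A + Z) - \dim Z))%N.
(* The factor 2 makes [tiebreak] drop strictly also when a non-cyclic [Z] is
   replaced by a subspace [W] of smaller rank with [W + <[x]> = Z]. *)
Let tiebreak (Z : {vspace E}) := ((r Z).*2 + (\dim {:E} - \dim Z))%N.

Section Lexmin.
Variable Z : {vspace E}.
Hypothesis Z_lexmin :
  forall Y, (rank_codim Y <= rank_codim Z)%N -> (tiebreak Z <= tiebreak Y)%N.

Lemma lexmin_flat : is_flat r Z.
Proof.
move=> x xZ; rewrite ltnNge; apply/negP => r_le.
set Y := (Z + <[x]>)%VS.
have sZY : (Z <= Y)%VS by rewrite addvSl.
have rY : r Y = r Z by apply/eqP; rewrite eqn_leq r_le r_mono.
have dZY : (\dim Z < \dim Y)%N.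
  by rewrite (ltn_leqif (dimv_leqif_sup sZY)) subv_add subvv -memvE.
have dY : (\dim Y <= \dim {:E})%N by rewrite dimvS ?subvf.
have := dimv_add_subv_le A sZY; have := dimvS (addvSr A Z); have := dimvS (addvSr A Y).
have := @Z_lexmin Y; rewrite /rank_codim /tiebreak rY; lia.
Qed.

Lemma lexmin_cyclic : is_cyclic r Z.
Proof.
move=> x xZ; split=> // W sWZ WxZ; apply/eqP; rewrite eqn_leq r_mono //=.
rewrite leqNgt; apply/negP => rW_lt.
have dZ : (\dim Z <= (\dim W).+1)%N by rewrite -WxZ dimv_add_line_le.
have dAW : (\dim (A + W) <= \dim (A + Z))%N by rewrite dimvS ?addvS.
have := dimvS sWZ; have := dimvS (addvSr A Z); have := dimvS (addvSr A W).
have := @Z_lexmin W; rewrite /rank_codim /tiebreak; lia.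
Qed.

End Lexmin.

Lemma exists_cyclic_flat_le :
  exists Z, is_cyclic_flat r Z /\ (r Z + \dim (A + Z) <= r A + \dim Z)%N.
Proof.
have [Z [le_ZA Z_lexmin]] := exists_lexmin rank_codim tiebreak A.
exists Z; split; first by split; [apply: lexmin_flat | apply: lexmin_cyclic].
have := dimvS (addvSr A Z); move: le_ZA; rewrite /rank_codim addvv subnn; lia.
Qed.

End CyclicFlatApproximation.

Section DirectSumSpaces.
Variables (F : finFieldType) (E1 E2 : vectType F).

Definition inl_vs (x : E1) : E1 * E2 := (x, 0).
Definition inr_vs (y : E2) : E1 * E2 := (0, y).

Fact inl_vs_linear : linear inl_vs.
Proof. by move=> a x y; rewrite /inl_vs; congr (_, _); rewrite /= scaler0 addr0. Qed.
HB.instance Definition _ := GRing.isLinear.Build F E1 (E1 * E2)%type _ inl_vs inl_vs_linear.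

Fact inr_vs_linear : linear inr_vs.
Proof. by move=> a x y; rewrite /inr_vs; congr (_, _); rewrite /= scaler0 addr0. Qed.
HB.instance Definition _ := GRing.isLinear.Build F E2 (E1 * E2)%type _ inr_vs inr_vs_linear.

Lemma mem_dsum_vs (Z1 : {vspace E1}) (Z2 : {vspace E2}) (z : E1 * E2) :
  (z \in dsum_vs Z1 Z2) = (z.1 \in Z1) && (z.2 \in Z2).
Proof.
apply/memv_addP/andP => [[_ /memv_imgP [x x1 ->] [_ /memv_imgP [y y2 ->] ->]]|[z1 z2]].
  by rewrite (lfunE inl_vs) (lfunE inr_vs) /= addr0 add0r.
exists (z.1, 0); first by apply/memv_imgP; exists z.1; rewrite ?(lfunE inl_vs).
exists (0, z.2); first by apply/memv_imgP; exists z.2; rewrite ?(lfunE inr_vs).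
by case: z {z1 z2} => x y; congr (_, _); rewrite /= ?addr0 ?add0r.
Qed.

Lemma proj1_dsum (Z1 : {vspace E1}) (Z2 : {vspace E2}) : proj1_vs (dsum_vs Z1 Z2) = Z1.
Proof.
apply/vspaceP => x; apply/memv_imgP/idP => [[z + ->]|x1].
  by rewrite mem_dsum_vs (lfunE fst) => /andP[].
by exists (x, 0); rewrite ?(lfunE fst) // mem_dsum_vs x1 mem0v.
Qed.

Lemma proj2_dsum (Z1 : {vspace E1}) (Z2 : {vspace E2}) : proj2_vs (dsum_vs Z1 Z2) = Z2.
Proof.
apply/vspaceP => y; apply/memv_imgP/idP => [[z + ->]|y2].
  by rewrite mem_dsum_vs (lfunE snd) => /andP[].
by exists (0, y); rewrite ?(lfunE snd) // mem_dsum_vs y2 mem0v.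
Qed.

Lemma dim_dsum (Z1 : {vspace E1}) (Z2 : {vspace E2}) :
  \dim (dsum_vs Z1 Z2) = (\dim Z1 + \dim Z2)%N.
Proof.
have /eqP inl_inj : lker (linfun inl_vs) == 0%VS.
  by apply/lker0P => x y; rewrite !(lfunE inl_vs) => -[].
have /eqP inr_inj : lker (linfun inr_vs) == 0%VS.
  by apply/lker0P => x y; rewrite !(lfunE inr_vs) => -[].
rewrite dimv_disjoint_sum; first by rewrite !limg_dim_eq // ?inl_inj ?inr_inj capv0.
apply/eqP; rewrite -subv0; apply/subvP => z /memv_capP[/memv_imgP[x _ ->]].
by case/memv_imgP=> y _; rewrite (lfunE inl_vs) (lfunE inr_vs) => -[-> _]; rewrite mem0v.
Qed.

Lemma dsumS (Z1 Y1 : {vspace E1}) (Z2 Y2 : {vspace E2}) :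
  (Z1 <= Y1)%VS -> (Z2 <= Y2)%VS -> (dsum_vs Z1 Z2 <= dsum_vs Y1 Y2)%VS.
Proof. by move=> sZY1 sZY2; rewrite addvS ?limgS. Qed.

Lemma sub_dsum_proj (X : {vspace E1 * E2}) : (X <= dsum_vs (proj1_vs X) (proj2_vs X))%VS.
Proof.
apply/subvP => z Xz; rewrite mem_dsum_vs.
by rewrite -(lfunE fst) -(lfunE snd) !memv_img.
Qed.

End DirectSumSpaces.

Section DirectSumRank.
Variables (F : finFieldType) (E1 E2 : vectType F).
Variables (rho1 : {vspace E1} -> nat) (rho2 : {vspace E2} -> nat).

Local Notation rho := (dsum_rank rho1 rho2).
Local Notation excess X :=
  ((rho1 (proj1_vs X))%:Z + (rho2 (proj2_vs X))%:Z - (\dim X)%:Z).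

Lemma dsum_rank_le (V X : {vspace E1 * E2}) : (X <= V)%VS ->
  rho V + (\dim X)%:Z <= (\dim V)%:Z + (rho1 (proj1_vs X))%:Z + (rho2 (proj2_vs X))%:Z.
Proof.
move=> sXV; have : rho V <= (\dim V)%:Z + excess X by rewrite lerD2l bigmin_le_cond.
lia.
Qed.

Lemma dsum_rank_attained (V : {vspace E1 * E2}) : exists2 X : {vspace E1 * E2}, (X <= V)%VS &
  rho V + (\dim X)%:Z = (\dim V)%:Z + (rho1 (proj1_vs X))%:Z + (rho2 (proj2_vs X))%:Z.
Proof.
rewrite /dsum_rank; set m := \big[_/_]_(_ | _) _.
suff [X sXV m_eq] : exists2 X : {vspace E1 * E2}, (X <= V)%VS & m = excess X.
  by exists X => //; rewrite m_eq; lia.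
apply: (big_ind (fun m => exists2 X : {vspace E1 * E2}, (X <= V)%VS & m = excess X)).
- by exists 0%VS; rewrite ?sub0v // /proj1_vs /proj2_vs !limg0 dimv0 subr0.
- by move=> _ _ [Xa sXa ->] [Xb sXb ->]; rewrite /Order.min; case: ifP; [exists Xa | exists Xb].
- by move=> X sXV; exists X.
Qed.

Lemma dsum_rank_dsum_le (Z1 : {vspace E1}) (Z2 : {vspace E2}) :
  rho (dsum_vs Z1 Z2) <= (rho1 Z1)%:Z + (rho2 Z2)%:Z.
Proof. by have := dsum_rank_le (subvv (dsum_vs Z1 Z2)); rewrite proj1_dsum proj2_dsum; lia. Qed.

Lemma dsum_rank_add_ge (V X : {vspace E1 * E2}) (Z1 : {vspace E1}) (Z2 : {vspace E2}) :
    (X <= V)%VS ->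
    rho V + (\dim X)%:Z = (\dim V)%:Z + (rho1 (proj1_vs X))%:Z + (rho2 (proj2_vs X))%:Z ->
    (rho1 Z1 + \dim (proj1_vs X + Z1) <= rho1 (proj1_vs X) + \dim Z1)%N ->
    (rho2 Z2 + \dim (proj2_vs X + Z2) <= rho2 (proj2_vs X) + \dim Z2)%N ->
  rho (dsum_vs Z1 Z2) + (\dim (V + dsum_vs Z1 Z2))%:Z <= rho V + (\dim (dsum_vs Z1 Z2))%:Z.
Proof.
move=> sXV rhoV le1 le2.
have sXZ : (X + dsum_vs Z1 Z2 <= dsum_vs (proj1_vs X + Z1) (proj2_vs X + Z2))%VS.
  by rewrite subv_add (subv_trans (sub_dsum_proj X)) ?dsumS ?addvSl ?addvSr.
have := dimvS sXZ; have := dimv_add_subv_le (dsum_vs Z1 Z2) sXV.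
rewrite !(addvC (dsum_vs _ _)) dim_dsum.
have := dim_dsum Z1 Z2; have := dsum_rank_dsum_le Z1 Z2.
move: rhoV le1 le2; lia.
Qed.

Hypothesis rho1_mono : forall V W : {vspace E1}, (V <= W)%VS -> (rho1 V <= rho1 W)%N.
Hypothesis rho2_mono : forall V W : {vspace E2}, (V <= W)%VS -> (rho2 V <= rho2 W)%N.

Lemma dsum_rank_add_le (V Z : {vspace E1 * E2}) :
  rho V + (\dim Z)%:Z <= rho Z + (\dim (V + Z))%:Z.
Proof.
have [X sXZ rhoZ] := dsum_rank_attained Z.
have := dsum_rank_le (capvSr X V).
have : (rho1 (proj1_vs (X :&: V)) <= rho1 (proj1_vs X))%N by rewrite rho1_mono ?limgS ?capvSl.
have : (rho2 (proj2_vs (X :&: V)) <= rho2 (proj2_vs X))%N by rewrite rho2_mono ?limgS ?capvSl.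
have := dimv_sum_cap X V.
have : (\dim (X + V) <= \dim (V + Z))%N by rewrite addvC dimvS ?addvS.
move: rhoZ; lia.
Qed.

End DirectSumRank.

Theorem corollary5p9 (F : finFieldType) (E1 E2 : vectType F)
    (rho1 : {vspace E1} -> nat) (rho2 : {vspace E2} -> nat) :
  is_qmatroid rho1 -> is_qmatroid rho2 ->
  forall V : {vspace E1 * E2},
    (exists Z1 : {vspace E1}, exists Z2 : {vspace E2},
       [/\ is_cyclic_flat rho1 Z1, is_cyclic_flat rho2 Z2 &
        dsum_rank rho1 rho2 V =
          dsum_rank rho1 rho2 (dsum_vs Z1 Z2)
          + ((\dim (V + dsum_vs Z1 Z2)%VS)%:Z - (\dim (dsum_vs Z1 Z2))%:Z)]) /\
    (forall (Z1 : {vspace E1}) (Z2 : {vspace E2}),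
       is_cyclic_flat rho1 Z1 -> is_cyclic_flat rho2 Z2 ->
       dsum_rank rho1 rho2 V <=
          dsum_rank rho1 rho2 (dsum_vs Z1 Z2)
          + ((\dim (V + dsum_vs Z1 Z2)%VS)%:Z - (\dim (dsum_vs Z1 Z2))%:Z)).
Proof.
move=> [_ mono1 _] [_ mono2 _] V.
split=> [|Z1 Z2 _ _]; last by have := dsum_rank_add_le mono1 mono2 V (dsum_vs Z1 Z2); lia.
have [X sXV rhoV] := dsum_rank_attained rho1 rho2 V.
have [Z1 [cf1 le1]] := exists_cyclic_flat_le mono1 (proj1_vs X).
have [Z2 [cf2 le2]] := exists_cyclic_flat_le mono2 (proj2_vs X).
exists Z1, Z2; split=> //.
have := dsum_rank_add_ge sXV rhoV le1 le2.
have := dsum_rank_add_le mono1 mono2 V (dsum_vs Z1 Z2); lia.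
Qed.
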